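(* Let $\Omega$ be a complete separable metric space, and let $\{\mathbb{E}_{\alpha}\}_{\alpha\in\mathcal{A}}$ be a family of nonlinear expectations on $(\Omega,C_b(\Omega))$. Suppose there exists a tight sublinear expectation $\hat{\mathbb{E}}$ on $(\Omega,B_b(\Omega))$ such that for every $\alpha\in\mathcal{A}$, \[ \mathbb{E}_{\alpha}[X]-\mathbb{E}_{\alpha}[Y]\le \hat{\mathbb{E}}[X-Y],\qquad X,Y\in C_b(\Omega). \] Then $\{\mathbb{E}_{\alpha}\}_{\alpha\in\mathcal{A}}$ is weakly compact: for each sequence $\{\mathbb{E}_{\alpha_n}\}_{n=1}^{\infty}$ there exists a subsequence $\{\mathbb{E}_{\alpha_{n_i}}\}_{i=1}^{\infty}$ such that for every $\varphi\in C_b(\Omega)$, the real sequence $\{\mathbb{E}_{\alpha_{n_i}}[\varphi]\}_{i=1}^{\infty}$ is a Cauchy sequence.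
   Context: $B_b(\Omega)$ denotes the space of bounded Borel-measurable real functions on $\Omega$ and $C_b(\Omega)$ the bounded continuous real functions on $\Omega$. For a linear space $\mathcal{H}$ of real functions on $\Omega$ containing the constants, a nonlinear expectation is a functional $\mathbb{E}:\mathcal{H}\to\mathbb{R}$ with $\mathbb{E}[c]=c$ for constants $c$ and $\mathbb{E}[X]\ge\mathbb{E}[Y]$ whenever $X\ge Y$. It is a sublinear expectation if in addition $\mathbb{E}[X+Y]\le\mathbb{E}[X]+\mathbb{E}[Y]$ and $\mathbb{E}[\lambda X]=\lambda\mathbb{E}[X]$ for $\lambda\ge 0$. A sublinear expectation $\hat{\mathbb{E}}$ on $(\Omega,B_b(\Omega))$ is tight if for each $\varepsilon>0$ there is a compact $K\subset\Omega$ with $\hat{\mathbb{E}}[\mathbf{1}_{K^c}]<\varepsilon$. *)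

From HB Require Import structures.
From mathcomp Require Import all_boot all_order all_algebra.
From mathcomp Require Import all_classical all_reals all_analysis.
Set Implicit Arguments. Unset Strict Implicit. Unset Printing Implicit Defensive.
Import Order.TTheory GRing.Theory Num.Theory.
Import numFieldNormedType.Exports.
Local Open Scope classical_set_scope.
Local Open Scope ring_scope.

Definition separable_space (T : topologicalType) : Prop :=
  exists D : set T, countable D /\ dense D.

Definition bounded_fun (R : realType) (T : Type) (f : T -> R) : Prop :=
  exists M : R, forall x, `|f x| <= M.

Definition Cb (R : realType) (T : topologicalType) (f : T -> R) : Prop :=
  continuous f /\ bounded_fun f.

Definition borel_set (T : topologicalType) (A : set T) : Prop :=
  <<s [set U : set T | open U] >> A.

Definition Bb (R : realType) (T : topologicalType) (f : T -> R) : Prop :=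
  (forall B : set R, measurable B -> borel_set (f @^-1` B)) /\ bounded_fun f.

Definition nonlinear_expectation (R : realType) (T : Type)
    (H : (T -> R) -> Prop) (E : (T -> R) -> R) : Prop :=
  (forall c : R, E (fun _ => c) = c) /\
  (forall X Y, H X -> H Y -> (forall w, Y w <= X w) -> E Y <= E X).

Definition sublinear_expectation (R : realType) (T : Type)
    (H : (T -> R) -> Prop) (E : (T -> R) -> R) : Prop :=
  nonlinear_expectation H E /\
  (forall X Y, H X -> H Y -> E (X \+ Y) <= E X + E Y) /\
  (forall (lam : R) X, H X -> 0 <= lam -> E (fun w => lam * X w) = lam * E X).

Definition tight (R : realType) (T : topologicalType) (E : (T -> R) -> R) : Prop :=
  forall eps : R, 0 < eps ->
    exists K : set T, compact K /\ E (\1_(~` K)) < eps.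

Definition cauchy_seqR (R : realType) (u : nat -> R) : Prop :=
  forall eps : R, 0 < eps -> exists N : nat,
    forall i j : nat, (N <= i)%N -> (N <= j)%N -> `|u i - u j| < eps.

From HB Require Import structures.
From mathcomp Require Import all_boot all_order all_algebra.
From mathcomp Require Import all_classical all_reals all_analysis.
From mathcomp Require Import lra.
Import Order.TTheory GRing.Theory Num.Theory.
Import numFieldNormedType.Exports.
Local Open Scope classical_set_scope.
Local Open Scope ring_scope.
Set Implicit Arguments. Unset Strict Implicit. Unset Printing Implicit Defensive.

(* A dense sequence (e_j) yields a countable family of bounded Lipschitz
   functions min(M, max(-M, max_j (q_j - L d(e_j, x)))), with q_j on a rational
   grid, approximating every bounded continuous function uniformly on each
   compact set.  Along a diagonal subsequence given by Bolzano-Weierstrass,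
   E_{alpha_n} is Cauchy on every member of this family.  For a general phi
   and a cone function psi within del of phi on a compact K, the domination
   hypothesis gives, uniformly in alpha,
     |E_alpha phi - E_alpha psi| <= del + ||phi - psi||_oo Ehat[1_{K^c}],
   and tightness makes the last term small, so E_{alpha_n}[phi] is Cauchy. *)

Section capped_distance.
Variables (R : realType) (X : pseudoMetricType R).

(* A pseudometric space only provides balls; the distance truncated at 1 is
   recovered as an infimum of radii. *)
Definition dist1_radii (x y : X) : set R :=
  [set r | 0 < r /\ (1 <= r \/ ball x r y)].

Definition dist1 (x y : X) : R := inf (dist1_radii x y).

Lemma has_inf_dist1_radii x y : has_inf (dist1_radii x y).
Proof. by split; [exists 1; split => //; left | exists 0 => r [/ltW]]. Qed.

Lemma dist1_ge0 x y : 0 <= dist1 x y.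
Proof.
by apply: lb_le_inf => [|r [/ltW]]; case: (has_inf_dist1_radii x y).
Qed.

Lemma dist1_le x y r : 0 < r -> 1 <= r \/ ball x r y -> dist1 x y <= r.
Proof. by move=> r0 h; apply: ge_inf; [case: (has_inf_dist1_radii x y)|]. Qed.

Lemma ball_dist1_le x y r : 0 < r -> ball x r y -> dist1 x y <= r.
Proof. by move=> r0 b; apply: dist1_le => //; right. Qed.

Lemma dist1_lt_ball x y r : dist1 x y < r -> r <= 1 -> ball x r y.
Proof.
move=> dr r1; have dr0 : 0 < r - dist1 x y by rewrite subr_gt0.
have [s [s0 [s1|bs]]] := inf_adherent dr0 (has_inf_dist1_radii x y);
  rewrite addrC subrK => sr.
  by move: (lt_le_trans sr r1); rewrite ltNge s1.
exact: (le_ball (ltW sr)) bs.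
Qed.

Lemma dist1C x y : dist1 x y = dist1 y x.
Proof.
rewrite /dist1; congr inf; apply/seteqP; split => r [r0 [h|h]];
  by split => //; (try by left); right; exact: ball_sym.
Qed.

Lemma dist1_triangle x y z : dist1 x z <= dist1 x y + dist1 y z.
Proof.
apply/ler_addgt0Pr => eps e0; have e20 : 0 < eps / 2 by rewrite divr_gt0.
have [r1 [r10 H1] lt1] := inf_adherent e20 (has_inf_dist1_radii x y).
have [r2 [r20 H2] lt2] := inf_adherent e20 (has_inf_dist1_radii y z).
apply: (@le_trans _ _ (r1 + r2)); last first.
  by rewrite [eps]splitr addrACA lerD // ltW.
apply: dist1_le; first by rewrite addr_gt0.
case: H1 => [h1|b1]; first by left; rewrite -[1]addr0 lerD // ltW.
case: H2 => [h2|b2]; first by left; rewrite -[1]add0r lerD // ltW.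
by right; exact: ball_triangle b1 b2.
Qed.

Lemma continuous_dist1 p : continuous (dist1 p).
Proof.
move=> x; apply/cvgrPdist_lt => eps e0.
have m0 : 0 < Num.min (eps / 2) 1 by rewrite lt_min divr_gt0 // ltr01.
near=> y.
have dxy : dist1 x y <= Num.min (eps / 2) 1.
  by apply: ball_dist1_le => //; near: y; exact: nbhsx_ballx.
have h1 := dist1_triangle p x y; have h2 := dist1_triangle p y x.
rewrite (dist1C y x) in h2; move: dxy; rewrite le_min => /andP[dxy _].
rewrite ltr_distlC; apply/andP; split; lra.
Unshelve. all: by end_near.
Qed.

End capped_distance.

Section cone_functions.
Variables (R : realType) (X : pseudoMetricType R) (e : nat -> X).

Definition cone (L N : nat) (jz : nat * int) (x : X) : R :=
  jz.2%:~R / N.+1%:R - L%:R * dist1 (e jz.1) x.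

Definition cone_max (Mc L N : nat) (s : seq (nat * int)) (x : X) : R :=
  foldr (fun jz acc => Num.max acc (cone L N jz x)) (- Mc%:R) s.

Definition cone_fun (Mc L N : nat) (s : seq (nat * int)) (x : X) : R :=
  Num.min Mc%:R (cone_max Mc L N s x).

(* All parameters are discrete, so the cone functions form a countable family. *)
Definition cone_index := (nat * nat * nat * seq (nat * int))%type.

Definition cone_family (p : cone_index) : X -> R :=
  cone_fun p.1.1.1 p.1.1.2 p.1.2 p.2.

Lemma continuous_cone L N jz : continuous (cone L N jz).
Proof.
move=> x; apply: (@continuousB _ R^o _ (fun=> jz.2%:~R / N.+1%:R)
  (fun x => L%:R * dist1 (e jz.1) x)); first exact: cst_continuous.
by apply: continuousM; [exact: cst_continuous|exact: continuous_dist1].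
Qed.

Lemma continuous_cone_max Mc L N s : continuous (cone_max Mc L N s).
Proof.
elim: s => [|jz s IH] x; first exact: cst_continuous.
apply: (@continuous_max _ _ (cone_max Mc L N s)); first exact: IH.
exact: continuous_cone.
Qed.

Lemma continuous_cone_fun Mc L N s : continuous (cone_fun Mc L N s).
Proof.
move=> x; apply: (@continuous_min _ _ (fun=> Mc%:R)).
  exact: cst_continuous.
exact: continuous_cone_max.
Qed.

Lemma cone_max_ge Mc L N s x : - Mc%:R <= cone_max Mc L N s x.
Proof. by elim: s => [|jz s IH] //=; rewrite le_max IH. Qed.

Lemma cone_le_max Mc L N s x jz :
  jz \in s -> cone L N jz x <= cone_max Mc L N s x.
Proof.
elim: s => [|jz' s IH] //=; rewrite in_cons le_max => /orP[/eqP ->|/IH ->//].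
by rewrite lexx orbT.
Qed.

Lemma cone_max_le Mc L N s x b : (forall jz, jz \in s -> cone L N jz x <= b) ->
  cone_max Mc L N s x <= Num.max (- Mc%:R) b.
Proof.
elim: s => [|jz s IH] H /=; first by rewrite le_max lexx.
rewrite ge_max IH => [|jz' jz's]; last by apply: H; rewrite in_cons jz's orbT.
by rewrite le_max H ?orbT // in_cons eqxx.
Qed.

Lemma norm_cone_fun_le Mc L N s x : `|cone_fun Mc L N s x| <= Mc%:R.
Proof.
have := cone_max_ge Mc L N s x; have := ler0n R Mc.
rewrite ler_norml /cone_fun ge_min lexx le_min; lra.
Qed.

Lemma Cb_cone_family p : Cb (cone_family p).
Proof.
split; first exact: continuous_cone_fun.
by exists p.1.1.1%:R => x; exact: norm_cone_fun_le.
Qed.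

End cone_functions.

Section dense_sequence.
Variables (R : realType) (X : pseudoMetricType R).

Definition dense_seq (e : nat -> X) : Prop :=
  forall x r, 0 < r -> exists j, ball x r (e j).

Lemma separable_dense_seq (x0 : X) : separable_space X -> exists e, dense_seq e.
Proof.
move=> [D [/pfcard_geP [->|/surjfunPex [e De]] dD]].
  by have [y []] := dD setT (ex_intro _ x0 I) openT.
exists e => x r r0.
have [y [/interior_subset xy]] :=
  dD _ (ex_intro _ x (nbhsx_ballx x _ r0)) (@open_interior _ (ball x r)).
by rewrite De => -[j _ ejy]; exists j; rewrite ejy.
Qed.

Lemma compact_finite_net (e : nat -> X) (K : set X) (r : R) :
  dense_seq e -> compact K -> 0 < r ->
  exists n, forall x, K x -> exists2 j, (j < n)%N & ball (e j) r x.
Proof.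
move=> de /compact_near_coveringP cK r0; have r20 : 0 < r / 2 by rewrite divr_gt0.
have [|n _ Hn] := cK nat \oo (fun n x => exists2 j, (j < n)%N & ball (e j) r x).
  move=> x Kx; have [j bj] := de x _ r20.
  exists (ball x (r / 2), [set n | (j < n)%N]).
    by split => //=; [exact: nbhsx_ballx|exists j.+1].
  case=> y n /= [bxy jn]; exists j => //.
  by rewrite [r]splitr; apply: ball_triangle (ball_sym bj) bxy.
by exists n; apply: (Hn n (leqnn n)).
Qed.

Lemma compact_continuous_uniform (K : set X) (phi : X -> R) (eps : R) :
  compact K -> continuous phi -> 0 < eps ->
  exists2 d, 0 < d & forall x y, K x -> ball x d y -> `|phi x - phi y| < eps.
Proof.
move=> /compact_near_coveringP cK cphi e0; have e20 : 0 < eps / 2 by rewrite divr_gt0.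
have [|N _ HN] := cK nat \oo
  (fun n x => forall y, ball x n.+1%:R^-1 y -> `|phi x - phi y| < eps).
  move=> x Kx; have /cvgrPdist_lt/(_ _ e20)/nbhs_ballP [r /= r0 Hr] := cphi x.
  have r20 : 0 < r / 2 by rewrite divr_gt0.
  have [N] := ltr_add_invr r20; rewrite add0r => HN.
  exists (ball x (r / 2), [set n | (N <= n)%N]).
    by split => //=; [exact: nbhsx_ballx|exists N].
  case=> y n /= [bxy Nn] z byz.
  have bxz : ball x r z.
    rewrite [r]splitr; apply: ball_triangle bxy (le_ball _ byz).
    apply: ltW; apply: le_lt_trans HN.
    by rewrite lef_pV2 ?posrE ?ltr0n // ler_nat ltnS.
  have r2r : r / 2 <= r by rewrite ler_pdivrMr // ler_pMr // ler1n.
  rewrite [eps]splitr; apply: le_lt_trans (ler_distD (phi x) _ _) _.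
  by rewrite distrC ltrD // Hr //; exact: (le_ball r2r).
exists N.+1%:R^-1; first by rewrite invr_gt0 ltr0n.
by move=> x y Kx; apply: (HN N (leqnn N)).
Qed.

End dense_sequence.

Lemma floor_grid_approx (R : realType) (r : R) (N : nat) :
  r - N.+1%:R^-1 < (Num.floor (r * N.+1%:R))%:~R / N.+1%:R <= r.
Proof.
have /andP[lo hi] := mem_rg1_floor (r * N.+1%:R).
set z : R := (Num.floor _)%:~R in lo hi *.
have N0 : 0 < N.+1%:R :> R by rewrite ltr0n.
rewrite ler_pdivrMr // lo andbT ltrBlDr.
have -> : z / N.+1%:R + N.+1%:R^-1 = (z + 1) / N.+1%:R by rewrite mulrDl mul1r.
by rewrite ltr_pdivlMr.
Qed.

Lemma clip_dist_le (R : realDomainType) (p c r Mc : R) :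
  `|p| <= Mc -> 0 <= r -> p - r <= c -> c <= Num.max (- Mc) (p + r) ->
  `|p - Num.min Mc c| <= r.
Proof.
rewrite ler_norml => /andP[pl pu] r0 lo.
have -> : Num.max (- Mc) (p + r) = p + r by apply/max_idPr; lra.
by move=> hi; rewrite ler_norml; case: (leP Mc c) => h; lra.
Qed.

Section cone_approximation.
Variables (R : realType) (X : pseudoMetricType R) (e : nat -> X).
Variables (phi : X -> R) (M : R).
Hypothesis phiM : forall x, `|phi x| <= M.

Definition fitted_peak (N j : nat) : nat * int :=
  (j, Num.floor (phi (e j) * N.+1%:R)).

Lemma cone_fitted_le (r d : R) (L N j : nat) x :
  0 <= r -> d <= 1 -> 2 * M + r <= L%:R * d ->
  (ball x d (e j) -> phi (e j) < phi x + r) ->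
  cone e L N (fitted_peak N j) x <= phi x + r.
Proof.
move=> r0 d1 HL near; rewrite /cone /=.
have /andP[_] := floor_grid_approx (phi (e j)) N; set q := _ / _ => qle.
have L0 : 0 <= L%:R :> R := ler0n _ _.
case: (ltP (dist1 (e j) x) d) => dist_d.
  have /near : ball x d (e j) by apply: dist1_lt_ball; rewrite // dist1C.
  have : 0 <= L%:R * dist1 (e j) x by rewrite mulr_ge0 ?dist1_ge0.
  lra.
have : L%:R * d <= L%:R * dist1 (e j) x by rewrite ler_wpM2l.
have /andP[? ?] : - M <= phi x <= M by rewrite -ler_norml.
have /andP[? ?] : - M <= phi (e j) <= M by rewrite -ler_norml.
lra.
Qed.

Lemma cone_fitted_ge (r : R) (L N j : nat) x :
  N.+1%:R^-1 <= r -> L%:R * dist1 (e j) x <= r -> phi x < phi (e j) + r ->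
  phi x - 3 * r <= cone e L N (fitted_peak N j) x.
Proof.
move=> Nr Ld near; rewrite /cone /=.
have /andP[+ _] := floor_grid_approx (phi (e j)) N.
move: Nr Ld; set q := _ / _; set w := N.+1%:R^-1; set t := L%:R * _.
lra.
Qed.

Lemma cone_fun_approx (K : set X) (eps : R) (Mc : nat) :
  dense_seq e -> compact K -> continuous phi -> 0 < eps -> M <= Mc%:R ->
  exists L N s, forall x, K x -> `|phi x - cone_fun e Mc L N s x| <= eps.
Proof.
move=> de cK cphi e0 MMc; pose r := eps / 3.
have r0 : 0 < r by rewrite divr_gt0.
have [d0 d00 Hd0] := compact_continuous_uniform cK cphi r0.
pose d := Num.min d0 1.
have d0' : 0 < d by rewrite lt_min d00 ltr01.
have [dd0 d1] : d <= d0 /\ d <= 1 by split; rewrite ge_min lexx ?orbT.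
(* Cones centred at distance [>= d] from [x] are then steep enough to stay
   below [phi x]; centres within [eta] of [x] get within [eps] of [phi x]. *)
pose L := (Num.truncn ((2 * M + eps) / d)).+1.
have HL : 2 * M + eps <= L%:R * d.
  by rewrite -ler_pdivrMr //; apply/ltW/truncnS_gt.
have L0 : 0 < L%:R :> R by rewrite ltr0n.
pose eta := Num.min d (r / L%:R).
have eta0 : 0 < eta by rewrite lt_min d0' divr_gt0.
have [etad etaL] : eta <= d /\ eta <= r / L%:R.
  by split; rewrite ge_min lexx ?orbT.
have [n Hn] := compact_finite_net de cK eta0.
have [N] := ltr_add_invr r0; rewrite add0r => /ltW Nr.
exists L, N, [seq fitted_peak N j | j <- iota 0 n] => x Kx.
have close y : ball x d y -> phi x - r < phi y < phi x + r.
  by move=> b; rewrite -ltr_distlC; apply: Hd0 => //; exact: (le_ball dd0).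
have [j jn bj] := Hn x Kx.
apply: clip_dist_le; first exact: le_trans (phiM x) MMc.
- exact: ltW.
- have js : fitted_peak N j \in [seq fitted_peak N j | j <- iota 0 n].
    by apply: map_f; rewrite mem_iota.
  apply: le_trans; last exact: cone_le_max js.
  have -> : phi x - eps = phi x - 3 * r by rewrite /r mulrC divfK.
  apply: cone_fitted_ge => //.
    rewrite mulrC -ler_pdivlMr //; apply: le_trans etaL.
    exact: ball_dist1_le eta0 bj.
  have /andP[+ _] := close (e j) (le_ball etad (ball_sym bj)); lra.
- apply: cone_max_le => _ /mapP[i _ ->].
  apply: cone_fitted_le d1 HL _; first exact: ltW.
  by move=> /close /andP[_]; rewrite /r; lra.
Qed.

End cone_approximation.

Section bounded_borel_functions.
Variables (R : realType) (T : topologicalType).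

Lemma borel_sigma_algebra : sigma_algebra setT (@borel_set T).
Proof. exact: smallest_sigma_algebra. Qed.

Lemma borel_open U : open U -> @borel_set T U.
Proof. by move=> oU; apply: sub_gen_smallest. Qed.

Lemma borel0 : @borel_set T set0.
Proof. by case: borel_sigma_algebra. Qed.

Lemma borelC U : @borel_set T U -> borel_set (~` U).
Proof. by case: borel_sigma_algebra => _ hC _ /hC; rewrite setTD. Qed.

Lemma borelT : @borel_set T setT.
Proof. by rewrite -setC0; apply: borelC; exact: borel0. Qed.

Lemma continuous_borel_preimage (f : T -> R) : continuous f ->
  forall B : set R, measurable B -> borel_set (f @^-1` B).
Proof.
move=> cf B mB; have : (@ocitv R).-sigma.-measurable B by exact: mB.
rewrite measurable_realfun.RGenOpens.measurableE.
apply: (@smallest_sub _ _ _ [set B | borel_set (f @^-1` B)]).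
  split => /=.
  - by rewrite preimage_set0; exact: borel0.
  - by move=> A /borelC; rewrite setTD preimage_setC.
  - by move=> F HF; rewrite preimage_bigcup; case: borel_sigma_algebra => _ _; apply.
move=> A [x [y ->]] /=; apply: borel_open.
by move: cf => /continuousP; apply; exact: interval_open.
Qed.

Lemma Cb_Bb (f : T -> R) : Cb f -> Bb f.
Proof. by case=> cf bf; split => //; exact: continuous_borel_preimage. Qed.

Lemma Bb_two_valued (U : set T) (a b : R) (g : T -> R) : borel_set U ->
  (forall x, U x -> g x = a) -> (forall x, ~ U x -> g x = b) -> Bb g.
Proof.
move=> bU ga gb; have gE x : g x = if `[< U x >] then a else b.
  by case: asboolP => [/ga|/gb].
split; last first.
  by exists (`|a| + `|b|) => x; rewrite gE; case: ifP; rewrite ?lerDl ?lerDr.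
move=> B _; have [Ba|nBa] := pselect (B a); have [Bb|nBb] := pselect (B b).
- suff -> : g @^-1` B = setT by exact: borelT.
  by apply/seteqP; split => x //= _; rewrite gE; case: ifP.
- suff -> : g @^-1` B = U by [].
  by apply/seteqP; split => x /=; rewrite gE; case: asboolP.
- suff -> : g @^-1` B = ~` U by exact: borelC.
  by apply/seteqP; split => x /=; rewrite gE; case: asboolP.
- suff -> : g @^-1` B = set0 by exact: borel0.
  by apply/seteqP; split => x //=; rewrite gE; case: ifP.
Qed.

End bounded_borel_functions.

Section expectation_estimates.
Variables (R : realType) (T : topologicalType).

Lemma Cb_cst (c : R) : @Cb R T (fun=> c).
Proof. by split; [exact: cst_continuous|exists `|c|]. Qed.

Lemma Cb_sub (X Y : T -> R) : Cb X -> Cb Y -> Cb (X \- Y).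
Proof.
move=> [cX [MX hX]] [cY [MY hY]]; split.
  by move=> x; apply: cvgB; [exact: cX|exact: cY].
by exists (MX + MY) => x; apply: le_trans (ler_normB _ _) _; exact: lerD.
Qed.

Lemma nonlinear_expectation_empty (H : (T -> R) -> Prop) (E : (T -> R) -> R) f :
  ~ inhabited T -> nonlinear_expectation H E -> E f = 0.
Proof.
move=> T0 [Ec _]; have -> : f = fun=> 0 by apply/funext => x; case: T0.
exact: Ec.
Qed.

Lemma norm_expectation_le (E : (T -> R) -> R) (f : T -> R) (B : R) :
  nonlinear_expectation (@Cb R T) E -> Cb f -> (forall x, `|f x| <= B) ->
  `|E f| <= B.
Proof.
move=> [Ec Emono] cf fB; have fB' x : - B <= f x <= B by rewrite -ler_norml.
have := Emono _ f (Cb_cst B) cf (fun x => proj2 (andP (fB' x))).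
have := Emono f _ cf (Cb_cst (- B)) (fun x => proj1 (andP (fB' x))).
by rewrite !Ec ler_norml => -> ->.
Qed.

Section dominated.
Variables (E Ehat : (T -> R) -> R) (K : set T).
Hypothesis hT : hausdorff_space T.
Hypothesis cK : compact K.
Hypothesis hsub : sublinear_expectation (@Bb R T) Ehat.
Hypothesis dom : forall X Y, Cb X -> Cb Y -> E X - E Y <= Ehat (X \- Y).

Lemma Bb_indicC_affine (a b : R) (g : T -> R) :
  (forall x, g x = a + b * \1_(~` K) x) -> Bb g.
Proof.
have bKc : borel_set (~` K).
  by apply: borel_open; apply: closed_openC; exact: compact_closed.
move=> gE; apply: (Bb_two_valued (a := a + b) (b := a) bKc) => x Kx;
  rewrite gE /indic.
  by rewrite mem_set // mulr1.
by rewrite memNset ?mulr0 ?addr0 //=; exact: contrapT.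
Qed.

Lemma dominated_expectation_sub_le (X Y : T -> R) (del c : R) :
  Cb X -> Cb Y -> 0 <= del -> 0 <= c ->
  (forall x, K x -> `|X x - Y x| <= del) -> (forall x, `|X x - Y x| <= c) ->
  E X - E Y <= del + c * Ehat (\1_(~` K)).
Proof.
move: hsub => [[Ec Emono] [Eadd Ehom]] cX cY d0 c0 hK hall.
pose h x := del + c * \1_(~` K) x.
have Bb_ind : Bb (\1_(~` K) : T -> R).
  by apply: (Bb_indicC_affine (a := 0) (b := 1)) => x; rewrite add0r mul1r.
have Bb_cind : Bb (fun x => c * \1_(~` K) x).
  by apply: (Bb_indicC_affine (a := 0) (b := c)) => x; rewrite add0r.
apply: le_trans (dom cX cY) _.
apply: (@le_trans _ _ (Ehat h)).
  apply: Emono; [exact: Bb_indicC_affine|exact/Cb_Bb/Cb_sub|move=> x].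
  rewrite /h /indic; have [Kx|nKx] := pselect (K x).
    by rewrite memNset ?mulr0 ?addr0 //=; apply: le_trans (ler_norm _) (hK x Kx).
  rewrite mem_set // mulr1; apply: le_trans (ler_norm _) (le_trans (hall x) _).
  by rewrite lerDr.
apply: le_trans (Eadd _ _ (Cb_Bb (Cb_cst del)) Bb_cind) _.
by rewrite Ec Ehom.
Qed.

Lemma dominated_expectation_dist_le (X Y : T -> R) (del c : R) :
  Cb X -> Cb Y -> 0 <= del -> 0 <= c ->
  (forall x, K x -> `|X x - Y x| <= del) -> (forall x, `|X x - Y x| <= c) ->
  `|E X - E Y| <= del + c * Ehat (\1_(~` K)).
Proof.
move=> cX cY d0 c0 hK hall; rewrite ler_norml dominated_expectation_sub_le //.
rewrite andbT lerNl opprB dominated_expectation_sub_le // => x.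
  by rewrite distrC; exact: hK.
by rewrite distrC.
Qed.
End dominated.

End expectation_estimates.

Section diagonal_extraction.
Variable R : realType.

Lemma cvg_cauchy_seqR (u : nat -> R) (l : R) : u @ \oo --> l -> cauchy_seqR u.
Proof.
move=> /cvgrPdist_lt ul eps e0; have e20 : 0 < eps / 2 by rewrite divr_gt0.
have [N _ HN] := ul _ e20; exists N => i j Ni Nj.
rewrite [eps]splitr; apply: le_lt_trans (ler_distD l _ _) _.
by rewrite distrC ltrD //; exact: HN.
Qed.

Lemma cauchy_seqR_approx (u : nat -> R) :
  (forall eps, 0 < eps -> exists2 v, cauchy_seqR v & forall i, `|u i - v i| <= eps) ->
  cauchy_seqR u.
Proof.
move=> uv eps e0; have e30 : 0 < eps / 3 by rewrite divr_gt0.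
have [v cv uvi] := uv _ e30; have [N vN] := cv _ e30.
exists N => i j Ni Nj; have /ltr_normlP[? ?] := vN i j Ni Nj.
have /ler_normlP[? ?] := uvi i; have /ler_normlP[? ?] := uvi j.
by apply/ltr_normlP; split; lra.
Qed.

Lemma cauchy_seqR_eventual_subseq (v w : nat -> R) (k : nat) :
  cauchy_seqR v -> (forall i, (k <= i)%N -> exists2 m, (i <= m)%N & w i = v m) ->
  cauchy_seqR w.
Proof.
move=> cv hw eps e0; have [N HN] := cv eps e0.
exists (maxn N k) => i j; rewrite !geq_max => /andP[Ni ki] /andP[Nj kj].
have [mi imi ->] := hw i ki; have [mj jmj ->] := hw j kj.
by apply: HN; [exact: leq_trans imi|exact: leq_trans jmj].
Qed.

Lemma incr_seq_ge (t : nat -> nat) : (forall i, (t i < t i.+1)%N) ->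
  forall i, (i <= t i)%N.
Proof. by move=> h; elim => // i IH; apply: leq_ltn_trans IH (h i). Qed.

Lemma incr_seq_homo (t : nat -> nat) : (forall i, (t i < t i.+1)%N) ->
  {homo t : i j / (i < j)%N >-> (i < j)%N}.
Proof. by move=> h; apply: homo_ltn => //; exact: ltn_trans. Qed.

Lemma bounded_cauchy_subseq (v : nat -> R) (B : R) : (forall n, `|v n| <= B) ->
  exists2 t : nat -> nat, (forall i, (t i < t i.+1)%N) & cauchy_seqR (v \o t).
Proof.
move=> vB; have bv : bounded_fun v.
  rewrite /bounded_near; near=> M => n _ /=.
  by apply: le_trans (vB n) _; near: M; apply: nbhs_pinfty_ge; exact: num_real.
have [t /increasing_seqP tinc /cvg_ex[l vl]] := bolzano_weierstrass bv.
by exists t => //; exact: cvg_cauchy_seqR vl.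
Unshelve. all: by end_near.
Qed.

Lemma diagonal_cauchy_subseq (u : nat -> nat -> R) :
  (forall k, exists B, forall n, `|u k n| <= B) ->
  exists n : nat -> nat, {homo n : i j / (i < j)%N >-> (i < j)%N} /\
    forall k, cauchy_seqR (fun i => u k (n i)).
Proof.
move=> ub; have /choice[st Hst] : forall p : nat * (nat -> nat),
    exists t : nat -> nat, (forall i, (t i < t i.+1)%N) /\
      cauchy_seqR (fun i => u p.1 (p.2 (t i))).
  move=> [k s]; have [B HB] := ub k.
  by have [t] := bounded_cauchy_subseq (fun n => HB (s n)); exists t.
(* [S k.+1] refines [S k] so that [u k] is Cauchy along it. *)
pose S := fix S k := if k is k'.+1 then S k' \o st (k', S k') else id.
have Sinc k i : (S k i < S k i.+1)%N.
  elim: k i => [//|k IH] i /=.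
  by apply: (incr_seq_homo IH); exact: (Hst (k, S k)).1.
have Srefine k m : exists2 t : nat -> nat,
    (forall i, (t i < t i.+1)%N) & forall i, S (m + k)%N i = S k (t i).
  elim: m => [|m [t tinc tS]]; first by exists id.
  exists (t \o st (m + k, S (m + k)))%N => [i|i]; last by rewrite addSn /= tS.
  by apply: (incr_seq_homo tinc); exact: (Hst _).1.
exists (fun i => S i.+1 i); split.
  apply: incr_seq_homo => i.
  change (S i.+1 i < S i.+1 (st (i.+1, S i.+1) i.+1))%N.
  apply: (incr_seq_homo (Sinc i.+1)).
  exact: incr_seq_ge (Hst (i.+1, S i.+1)).1 i.+1.
move=> k; apply: (cauchy_seqR_eventual_subseq (k := k) (Hst (k, S k)).2) => i ki.
have [t tinc tS] := Srefine k.+1 (i - k)%N.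
exists (t i); first exact: incr_seq_ge.
change (u k (S i.+1 i) = u k (S k.+1 (t i))).
by rewrite -tS addnS (subnK ki).
Qed.

Lemma countable_diagonal_cauchy_subseq (I : countType) (u : I -> nat -> R) :
  (forall p, exists B, forall n, `|u p n| <= B) ->
  exists n : nat -> nat, {homo n : i j / (i < j)%N >-> (i < j)%N} /\
    forall p, cauchy_seqR (fun i => u p (n i)).
Proof.
move=> ub; pose v k := if @unpickle I k is Some p then u p else fun=> 0.
have [|n [ninc nv]] := @diagonal_cauchy_subseq v.
  rewrite /v => k; case: unpickle => [p|]; first exact: ub.
  by exists 0 => _; rewrite normr0.
by exists n; split => // p; have := nv (pickle p); rewrite /v pickleK.
Qed.

End diagonal_extraction.

Lemma expectation_cone_approx (R : realType) (Omega : pseudoMetricType R)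
    (A : Type) (E : A -> (Omega -> R) -> R) (Ehat : (Omega -> R) -> R)
    (e : nat -> Omega) (phi : Omega -> R) (eps : R) :
  hausdorff_space Omega -> dense_seq e ->
  sublinear_expectation (@Bb R Omega) Ehat -> tight Ehat ->
  (forall a X Y, Cb X -> Cb Y -> E a X - E a Y <= Ehat (X \- Y)) ->
  Cb phi -> 0 < eps ->
  exists p : cone_index, forall a, `|E a phi - E a (cone_family e p)| <= eps.
Proof.
move=> hT de hsub htight dom [cphi [M phiM]] e0.
pose Mc := (Num.truncn M).+1.
have MMc : M <= Mc%:R by exact/ltW/truncnS_gt.
pose c := `|M| + Mc%:R.
have c0 : 0 <= c by rewrite addr_ge0.
have e20 : 0 < eps / 2 by rewrite divr_gt0.
pose eta := eps / 2 / (c + 1).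
have c1 : 0 < c + 1 by rewrite ltr_wpDl.
have eta0 : 0 < eta by rewrite divr_gt0.
have [K [cK hK]] := htight eta eta0.
have [L [N [s Hs]]] := cone_fun_approx phiM de cK cphi e20 MMc.
exists (Mc, L, N, s) => a.
apply: le_trans (dominated_expectation_dist_le hT cK hsub (dom a) _
  (Cb_cone_family e (Mc, L, N, s)) (ltW e20) c0 Hs _) _.
- by split; [|exists M].
- move=> x; apply: le_trans (ler_normB _ _) _.
  by rewrite lerD ?norm_cone_fun_le // (le_trans (phiM x) (ler_norm M)).
have : c * Ehat (\1_(~` K)) <= c * eta by rewrite ler_wpM2l // ltW.
have : c * eta + eta = eps / 2.
  by rewrite -[X in _ + X]mul1r -mulrDl mulrC divfK ?gt_eqF.
move: eta0; set t := c * Ehat _; set ce := c * eta; lra.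
Qed.

Theorem mainTheorem1 (R : realType) (Omega : completePseudoMetricType R)
  (A : Type) (E : A -> (Omega -> R) -> R) (Ehat : (Omega -> R) -> R) :
  hausdorff_space Omega ->
  separable_space Omega ->
  (forall a : A, nonlinear_expectation (@Cb R Omega) (E a)) ->
  sublinear_expectation (@Bb R Omega) Ehat ->
  tight Ehat ->
  (forall (a : A) (X Y : Omega -> R), Cb X -> Cb Y ->
     E a X - E a Y <= Ehat (X \- Y)) ->
  forall alpha : nat -> A,
  exists n : nat -> nat,
    {homo n : i j / (i < j)%N >-> (i < j)%N} /\
    forall phi : Omega -> R, Cb phi ->
      cauchy_seqR (fun i => E (alpha (n i)) phi).
Proof.
move=> hT sep hE hsub htight dom alpha.
have [[x0]|Omega0] := pselect (inhabited Omega); last first.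
  exists id; split => // phi _ eps e0; exists 0%N => i j _ _.
  by rewrite !(nonlinear_expectation_empty _ Omega0 (hE _)) subrr normr0.
have [e de] := separable_dense_seq x0 sep.
have bounded p : exists B, forall k, `|E (alpha k) (cone_family e p)| <= B.
  exists p.1.1.1%:R => k.
  apply: (norm_expectation_le (hE _) (Cb_cone_family e p)) => x.
  exact: norm_cone_fun_le.
have [n [ninc ncauchy]] := countable_diagonal_cauchy_subseq bounded.
exists n; split => // phi cphi; apply: cauchy_seqR_approx => eps e0.
have [p Hp] := expectation_cone_approx hT de hsub htight dom cphi e0.
by exists (fun i => E (alpha (n i)) (cone_family e p)).
Qed.
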